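(* Let $G$ be an $n$-node network graph and let $T$ be an HST constructed on top of $G$ by the randomized algorithm of Fakcharoenphol, Rao and Talwar. Let $R$ be a dynamic set of queueing requests issued at the nodes of $G$ (each request at node $v$ viewed as issued at the leaf of $T$ corresponding to $v$), and assume the sequence of requests is independent of the randomness of the HST construction. Then $\mathbb{E}[\mathrm{OPT}_T(R)]\le O(\log n)\cdot \mathrm{OPT}_G(R)$.
   Context: The Fakcharoenphol–Rao–Talwar (FRT) randomized construction maps the nodes of $G$ bijectively to the leaves of an HST $T$ such that for all nodes $x,y$: $d_G(x,y)\le d_T(x,y)$ and $\mathbb{E}[d_T(x,y)]=O(\log n)\cdot d_G(x,y)$. A request is $r=(v,t)$ (node $v$, time $t\ge0$), with a dummy request $r_0=(v_0,0)$ ordered first. For a weighted graph $H$, $\mathrm{OPT}_H(R)=\min_\pi\sum_{i=1}^{|R|-1}\max\{d_H(v_{\pi(i-1)},v_{\pi(i)}),\,t_{\pi(i-1)}-t_{\pi(i)}\}$, minimum over orderings $\pi$ of $R$ with $\pi(0)=0$. *)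

From HB Require Import structures.
From mathcomp Require Import all_boot all_order all_algebra all_fingroup.
From mathcomp Require Import all_classical all_reals all_analysis.
Set Implicit Arguments. Unset Strict Implicit. Unset Printing Implicit Defensive.
Import Order.TTheory GRing.Theory Num.Theory.
Local Open Scope ring_scope.

Section Defs.
Variable R : realType.

Definition is_metric (n : nat) (d : 'I_n -> 'I_n -> R) : Prop :=
  (forall x y, 0 <= d x y) /\
  (forall x y, d x y = 0 <-> x = y) /\
  (forall x y, d x y = d y x) /\
  (forall x y z, d x z <= d x y + d y z).

(* Leaf metric of a hierarchically well-separated tree whose leaves are
   (bijectively) the nodes of G: an ultrametric. *)
Definition is_hst_leaf_metric (n : nat) (d : 'I_n -> 'I_n -> R) : Prop :=
  is_metric d /\ (forall x y z, d x z <= Num.max (d x y) (d y z)).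

(* Cost of serving the requests (v i, t i), i = 0..k (request 0 is the dummy
   request r_0 = (v_0, 0)), in the order given by the permutation s:
   sum_{i=1}^{k} max { d(v_{s(i-1)}, v_{s(i)}), t_{s(i-1)} - t_{s(i)} }. *)
Definition order_cost (n k : nat) (d : 'I_n -> 'I_n -> R)
    (v : 'I_k.+1 -> 'I_n) (t : 'I_k.+1 -> R) (s : 'S_k.+1) : R :=
  \sum_(i < k)
    Num.max (d (v (s (inord i))) (v (s (inord i.+1))))
            (t (s (inord i)) - t (s (inord i.+1))).

Definition OPT (n k : nat) (d : 'I_n -> 'I_n -> R)
    (v : 'I_k.+1 -> 'I_n) (t : 'I_k.+1 -> R) : R :=
  \big[Num.min/order_cost d v t 1%g]_(s : 'S_k.+1 | s ord0 == ord0)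
     order_cost d v t s.

Definition is_distr (Omega : finType) (p : Omega -> R) : Prop :=
  (forall w, 0 <= p w) /\ \sum_(w : Omega) p w = 1.

Definition expect (Omega : finType) (p : Omega -> R) (X : Omega -> R) : R :=
  \sum_(w : Omega) p w * X w.

End Defs.

From HB Require Import structures.
From mathcomp Require Import all_boot all_order all_algebra all_fingroup.
From mathcomp Require Import all_classical all_reals all_analysis.
Set Implicit Arguments. Unset Strict Implicit. Unset Printing Implicit Defensive.
Import Order.TTheory GRing.Theory Num.Theory.
Local Open Scope ring_scope.

(* Fix an ordering s that is optimal for G; then OPT_T <= cost_T(s) for every
   tree, and it suffices to bound E[cost_T(s)] step by step.  A step costs
   max(d_T(a, b), D) <= d_T(a, b) + max(D, 0), whose expectation is at most
   alpha d_G(a, b) + max(D, 0) <= (alpha + 1) max(d_G(a, b), D), where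
   alpha = c ln n is the FRT stretch.  Since ln n >= ln 2 for n >= 2, the
   additive 1 is absorbed into ln n / ln 2. *)

Section Expectation.
Variables (R : realType) (Omega : finType) (p : Omega -> R).

Lemma ler_expect (X Y : Omega -> R) : (forall w, 0 <= p w) ->
  (forall w, X w <= Y w) -> expect p X <= expect p Y.
Proof. by move=> p_ge0 leXY; apply: ler_sum => w _; exact: ler_wpM2l. Qed.

Lemma expectD (X Y : Omega -> R) :
  expect p (fun w => X w + Y w) = expect p X + expect p Y.
Proof. by rewrite /expect -big_split; apply: eq_bigr => w _; rewrite mulrDr. Qed.

Lemma expect_cst (a : R) : is_distr p -> expect p (fun=> a) = a.
Proof. by move=> [_ p1]; rewrite /expect -mulr_suml p1 mul1r. Qed.

Lemma expect_sum (I : finType) (X : I -> Omega -> R) :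
  expect p (fun w => \sum_i X i w) = \sum_i expect p (X i).
Proof. by rewrite /expect; under eq_bigr do rewrite mulr_sumr; exact: exchange_big. Qed.

End Expectation.

Lemma max_le_add_max0 (R : realDomainType) (a b : R) :
  0 <= a -> Num.max a b <= a + Num.max b 0.
Proof.
move=> a_ge0; rewrite ge_max lerDl le_max lexx orbT /=.
by rewrite (le_trans (_ : b <= Num.max b 0)) ?lerDr // le_max lexx.
Qed.

Lemma mulr_add_max0_le (R : realDomainType) (alpha g D : R) :
  0 <= alpha -> 0 <= g ->
  alpha * g + Num.max D 0 <= (alpha + 1) * Num.max g D.
Proof.
move=> alpha_ge0 g_ge0; rewrite mulrDl mul1r lerD //.
  by rewrite ler_wpM2l // le_max lexx.
by rewrite ge_max !le_max lexx g_ge0 orbT.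
Qed.

Section OrderCost.
Variables (R : realType) (n k : nat) (v : 'I_k.+1 -> 'I_n) (t : 'I_k.+1 -> R).

Lemma OPT_le_order_cost (d : 'I_n -> 'I_n -> R) (s : 'S_k.+1) :
  s ord0 = ord0 -> OPT d v t <= order_cost d v t s.
Proof. by move=> s0; apply: bigmin_le_cond; rewrite s0. Qed.

Lemma OPT_attained (d : 'I_n -> 'I_n -> R) :
  exists2 s : 'S_k.+1, s ord0 = ord0 & OPT d v t = order_cost d v t s.
Proof.
apply: (big_ind (fun x => exists2 s : 'S_k.+1, s ord0 = ord0 &
                            x = order_cost d v t s)).
- by exists 1%g; rewrite ?perm1.
- move=> _ _ [s1 s1_0 ->] [s2 s2_0 ->].
  by rewrite /Num.min; case: ifP => _; [exists s1 | exists s2].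
- by move=> s /eqP s0; exists s.
Qed.

Lemma order_cost_ge0 (d : 'I_n -> 'I_n -> R) (s : 'S_k.+1) :
  (forall x y, 0 <= d x y) -> 0 <= order_cost d v t s.
Proof. by move=> d_ge0; apply: sumr_ge0 => i _; rewrite le_max d_ge0. Qed.

Lemma expect_order_cost_le (Omega : finType) (p : Omega -> R)
    (dT : Omega -> 'I_n -> 'I_n -> R) (dG : 'I_n -> 'I_n -> R) (alpha : R) :
  is_distr p -> 0 <= alpha ->
  (forall w x y, 0 <= dT w x y) -> (forall x y, 0 <= dG x y) ->
  (forall x y, expect p (fun w => dT w x y) <= alpha * dG x y) ->
  forall s : 'S_k.+1,
    expect p (fun w => order_cost (dT w) v t s) <=
    (alpha + 1) * order_cost dG v t s.
Proof.
move=> p_distr alpha_ge0 dT_ge0 dG_ge0 stretch s.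
rewrite /order_cost expect_sum mulr_sumr; apply: ler_sum => i _.
set a := v _; set b := v _; set D := t _ - t _.
have [p_ge0 _] := p_distr.
apply: le_trans _ (mulr_add_max0_le D alpha_ge0 (dG_ge0 a b)).
apply: le_trans _ (lerD (stretch a b) (lexx (Num.max D 0))).
rewrite -[X in _ + X](expect_cst (Num.max D 0) p_distr) -expectD.
by apply: ler_expect => // w; exact: max_le_add_max0.
Qed.

End OrderCost.

Lemma mulr_ln_add1_le (R : realType) (c : R) (n : nat) : (2 <= n)%N ->
  c * ln n%:R + 1 <= (c + (ln (2%:R : R))^-1) * ln n%:R.
Proof.
move=> n_ge2.
have ln2_gt0 : 0 < ln (2%:R : R) by rewrite ln_gt0 // ltr1n.
rewrite mulrDl lerD2l mulrC ler_pdivlMr // mul1r.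
by rewrite ler_ln ?posrE ?ler_nat ?ltr0n //; exact: ltnW.
Qed.

Theorem lemma1 (R : realType) (c : R) (hc : 0 < c) :
  exists C : R, 0 < C /\
  forall (n : nat) (dG : 'I_n -> 'I_n -> R)
         (Omega : finType) (p : Omega -> R) (dT : Omega -> 'I_n -> 'I_n -> R),
    (2 <= n)%N ->
    is_metric dG ->
    is_distr p ->
    (forall w, is_hst_leaf_metric (dT w)) ->
    (forall w x y, dG x y <= dT w x y) ->
    (forall x y, expect p (fun w => dT w x y) <= c * ln n%:R * dG x y) ->
    forall (k : nat) (v : 'I_k.+1 -> 'I_n) (t : 'I_k.+1 -> R),
      t ord0 = 0 -> (forall i, 0 <= t i) ->
      expect p (fun w => OPT (dT w) v t) <= C * ln n%:R * OPT dG v t.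
Proof.
have ln2_gt0 : 0 < ln (2%:R : R) by rewrite ln_gt0 // ltr1n.
exists (c + (ln 2%:R)^-1); split; first by rewrite addr_gt0 // invr_gt0.
move=> n dG Omega p dT n_ge2 [dG_ge0 _] p_distr dT_hst _ stretch k v t _ _.
have [p_ge0 _] := p_distr.
have dT_ge0 w : forall x y, 0 <= dT w x y by have [[]] := dT_hst w.
have lnn_ge0 : 0 <= ln (n%:R : R) by apply: ln_ge0; rewrite ler1n; exact: ltnW.
have [s s0 ->] := OPT_attained v t dG.
apply: le_trans (ler_expect p_ge0 (fun w => OPT_le_order_cost v t (dT w) s0)) _.
apply: le_trans (expect_order_cost_le v t p_distr _ dT_ge0 dG_ge0 stretch s) _.
  by rewrite mulr_ge0 // ltW.
by rewrite ler_wpM2r ?order_cost_ge0 // mulr_ln_add1_le.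
Qed.
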